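(* Let $\mathcal{R}$ be a tolerance relation on $X=\{1,\dots,n\}$ such that $G(\mathcal{R})$ is a connected chordal graph with graph diameter at least $2$. Then $E(\mathcal{R})$ and $E(\mathcal{R})^d$ are not completely order isomorphic (as operator systems).
   Context: A tolerance relation on $X=\{1,\dots,n\}$ is a reflexive symmetric relation $\mathcal{R}\subseteq X\times X$; its graph $G(\mathcal{R})$ has vertex set $X$ and an edge between distinct $i,j$ iff $(i,j)\in\mathcal{R}$. A graph is chordal if every cycle of length at least 4 has a chord. $E(\mathcal{R})=\{(x_{ij})\in M_n(\mathbb{C})\mid x_{ij}=0\text{ if }(i,j)\notin\mathcal{R}\}$ is an operator system with the order inherited from $M_n(\mathbb{C})$ and unit the identity. Its dual operator system $E(\mathcal{R})^d$ is identified with the $*$-vector space $E(\mathcal{R})$ with matrix order $M_m(E(\mathcal{R})^d)_+=\{M\in M_m(E(\mathcal{R}))\mid\exists N\in M_m(E(\mathcal{R})^\perp),\ M+N\in M_{mn}(\mathbb{C})_+\}$, where $E(\mathcal{R})^\perp=\{y\in M_n(\mathbb{C})\mid y_{ij}=0\ \forall(i,j)\in\mathcal{R}\}$, and the identity matrix as order unit. A complete order isomorphism is a unital linear bijection $\varphi$ with $\varphi$ and $\varphi^{-1}$ completely positive. *)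

From HB Require Import structures.
From mathcomp Require Import all_boot all_order all_algebra complex.
From mathcomp Require Import reals Rstruct.

Set Implicit Arguments. Unset Strict Implicit. Unset Printing Implicit Defensive.
Import Order.TTheory GRing.Theory Num.Theory.
Local Open Scope ring_scope.

Definition C : numClosedFieldType := Rdefinitions.R[i].

Definition tolerance (n : nat) (Rl : rel 'I_n) : Prop :=
  reflexive Rl /\ symmetric Rl.

Definition gadj (n : nat) (Rl : rel 'I_n) : rel 'I_n :=
  fun i j => (i != j) && Rl i j.

Definition gconnected (n : nat) (Rl : rel 'I_n) : Prop :=
  forall i j : 'I_n, connect (gadj Rl) i j.

Definition chordal (n : nat) (Rl : rel 'I_n) : Prop :=
  forall s : seq 'I_n, uniq s -> (4 <= size s)%N -> cycle (gadj Rl) s ->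
    exists x y, [/\ x \in s, y \in s, gadj Rl x y,
                    y != next s x & x != next s y].

Definition dist_ge (n : nat) (Rl : rel 'I_n) (k : nat) (i j : 'I_n) : Prop :=
  forall p : seq 'I_n, path (gadj Rl) i p -> last i p = j -> (k <= size p)%N.

Definition diameter_ge (n : nat) (Rl : rel 'I_n) (k : nat) : Prop :=
  exists i j : 'I_n, dist_ge Rl k i j.

Definition inE (n : nat) (Rl : rel 'I_n) (x : 'M[C]_n) : Prop :=
  forall i j, ~~ Rl i j -> x i j = 0.

Definition inEperp (n : nat) (Rl : rel 'I_n) (y : 'M[C]_n) : Prop :=
  forall i j, Rl i j -> y i j = 0.

Definition psd (k : nat) (M : 'M[C]_k) : Prop :=
  forall v : 'cV[C]_k, 0 <= ((map_mx Num.conj v)^T *m M *m v) 0 0.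

(* An element of M_m(M_n(C)), given by its blocks, viewed in M_{mn}(C). *)
Definition blockmx (n m : nat) (F : 'I_m -> 'I_m -> 'M[C]_n)
  : 'M[C]_(\sum_(i < m) n) :=
  \mxblock_(i < m, j < m) F i j.

Definition posE (n : nat) (Rl : rel 'I_n) (m : nat)
  (F : 'I_m -> 'I_m -> 'M[C]_n) : Prop :=
  (forall i j, inE Rl (F i j)) /\ psd (blockmx F).

Definition posEd (n : nat) (Rl : rel 'I_n) (m : nat)
  (F : 'I_m -> 'I_m -> 'M[C]_n) : Prop :=
  (forall i j, inE Rl (F i j)) /\
  exists N : 'I_m -> 'I_m -> 'M[C]_n,
    (forall i j, inEperp Rl (N i j)) /\
    psd (blockmx (fun i j => F i j + N i j)).

(* A complete order isomorphism phi : E(R) -> E(R)^d (both carried by the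
   *-vector space E(R), unit the identity matrix): a unital linear bijection
   of E(R) such that phi and phi^{-1} are completely positive.  Maps are
   represented by functions on M_n(C), only their behaviour on E(R) matters. *)
Definition complete_order_iso_E_Ed (n : nat) (Rl : rel 'I_n) : Prop :=
  exists phi psi : 'M[C]_n -> 'M[C]_n,
    [/\ (forall x, inE Rl x -> inE Rl (phi x)),
        (forall y, inE Rl y -> inE Rl (psi y)),
        (forall a x y, inE Rl x -> inE Rl y ->
            phi (a *: x + y) = a *: phi x + phi y),
        (forall x, inE Rl x -> psi (phi x) = x) /\
        (forall y, inE Rl y -> phi (psi y) = y)
      & phi 1%:M = 1%:M /\
       (forall m (F : 'I_m -> 'I_m -> 'M[C]_n),
            posE Rl F -> posEd Rl (fun i j => phi (F i j))) /\
        (forall m (F : 'I_m -> 'I_m -> 'M[C]_n),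
            posEd Rl F -> posE Rl (fun i j => psi (F i j)))].

(* Connectedness and diameter at least 2 give an induced path a - b - c.  In
   M_3(E(R)) the positive rank-one elements P1 = v1 v1^* and P2 = v2 v2^*, with
   v1 = e_(0,a) + e_(1,b) and v2 = e_(1,b) + e_(2,c), span a face: a positive
   matrix below a multiple of P1 + P2 kills every vector orthogonal to v1 and
   v2, and its ((0,a), (2,c)) entry vanishes because (a, c) is not in R, which
   leaves only combinations of P1 and P2.  A complete order isomorphism phi
   carries this face onto the face of M_3(E(R)^d)_+ generated by
   phi(P1) + phi(P2).  The dual order is coarser: if S1, S2 are positive lifts
   of phi(P1), phi(P2) and p is an index in the middle block, then for
   lam = 1, -1 the truncation to E(R) of the rank-one matrix built from row p
   of S1 + lam S2 lies in that face.  Its coefficients can be read off the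
   outer diagonal blocks, where lam does not appear, while its (p, p) entry is
   |(1 + lam) d|^2 with d = S1 p p.  Hence d = 0 for every such p, which forces
   the middle block of phi(P1) to vanish. *)

From HB Require Import structures.
From mathcomp Require Import all_boot all_order all_algebra complex ring.

Set Implicit Arguments. Unset Strict Implicit. Unset Printing Implicit Defensive.
Import Order.TTheory GRing.Theory Num.Theory.
Local Open Scope ring_scope.

Section HermitianForm.
Variable k : nat.
Implicit Types (M A B : 'M[C]_k) (u v w x : 'I_k -> C).

Definition form M u v : C := \sum_i \sum_j (u i)^* * M i j * v j.

Lemma psdP M : psd M <-> forall u, 0 <= form M u u.
Proof.
have formE (y : 'cV[C]_k) : ((map_mx Num.conj y)^T *m M *m y) 0 0 =
    form M (fun i => y i 0) (fun j => y j 0).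
  rewrite /form !mxE exchange_big /=; apply: eq_bigr => j _.
  by rewrite !mxE big_distrl /=; apply: eq_bigr => i _; rewrite !mxE.
split=> [Mpsd u|Mform y]; last by rewrite formE.
have := Mpsd (\col_i u i); rewrite formE.
suff -> : form M (fun i => (\col_i u i) i 0) (fun j => (\col_i u i) j 0)
  = form M u u by [].
by apply: eq_bigr => i _; apply: eq_bigr => j _; rewrite !mxE.
Qed.

Lemma formDl M u w v : form M (fun i => u i + w i) v = form M u v + form M w v.
Proof.
rewrite /form -big_split /=; apply: eq_bigr => i _.
by rewrite -big_split /=; apply: eq_bigr => j _; rewrite rmorphD /= !mulrDl.
Qed.

Lemma formDr M u v w : form M u (fun j => v j + w j) = form M u v + form M u w.
Proof.
rewrite /form -big_split /=; apply: eq_bigr => i _.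
by rewrite -big_split /=; apply: eq_bigr => j _; rewrite mulrDr.
Qed.

Lemma formZl M a u v : form M (fun i => a * u i) v = a^* * form M u v.
Proof.
rewrite /form mulr_sumr; apply: eq_bigr => i _.
by rewrite mulr_sumr; apply: eq_bigr => j _; rewrite rmorphM /= !mulrA.
Qed.

Lemma formZr M a u v : form M u (fun j => a * v j) = a * form M u v.
Proof.
rewrite /form mulr_sumr; apply: eq_bigr => i _.
by rewrite mulr_sumr; apply: eq_bigr => j _; rewrite mulrCA.
Qed.

Lemma form_mxD A B u v : form (A + B) u v = form A u v + form B u v.
Proof.
rewrite /form -big_split /=; apply: eq_bigr => i _.
by rewrite -big_split /=; apply: eq_bigr => j _; rewrite mxE mulrDr mulrDl.
Qed.

Lemma form_mxZ a A u v : form (a *: A) u v = a * form A u v.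
Proof.
rewrite /form mulr_sumr; apply: eq_bigr => i _.
by rewrite mulr_sumr; apply: eq_bigr => j _; rewrite mxE; ring.
Qed.

Lemma form_mxB A B u v : form (A - B) u v = form A u v - form B u v.
Proof.
rewrite /form -sumrB; apply: eq_bigr => i _.
by rewrite -sumrB; apply: eq_bigr => j _; rewrite !mxE; ring.
Qed.

Lemma psd_form_real M u : psd M -> (form M u u)^* = form M u u.
Proof. by move=> /psdP/(_ u)/ger0_real/CrealP. Qed.

Lemma psd_formC M u w : psd M -> form M w u = (form M u w)^*.
Proof.
(* Polarization: the form is real on [u + w] and on [u + 'i w]. *)
move=> Mpsd; have [ru rw] := (psd_form_real u Mpsd, psd_form_real w Mpsd).
have h1 := psd_form_real (fun i => u i + w i) Mpsd.
have h2 := psd_form_real (fun i => u i + 'i * w i) Mpsd.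
rewrite !formDl !formDr !formZl !formZr in h1 h2.
rewrite !rmorphD /= !rmorphM /= ?conjCK ?rmorphN /= ?conjCi ?opprK ru rw in h1 h2.
move: h1 h2; set a := form M u u; set c := form M w w.
set X := form M u w; set Y := form M w u => h1 h2.
have e1 : X^* + Y^* - X - Y = 0.
  by rewrite -(subrr (a + X + (Y + c))) -{1}h1; ring.
have /eqP : 'i * (Y^* - X^* - X + Y) = 0.
  by rewrite -(subrr (a + 'i * X + (- 'i * Y + - 'i * ('i * c)))) -{1}h2; ring.
rewrite mulf_eq0 (negbTE (@neq0Ci C)) /= => /eqP e2.
have /eqP : 2 * (Y^* - X) = 0 by rewrite -[RHS](addr0 0) -{1}e1 -e2; ring.
by rewrite mulf_eq0 pnatr_eq0 /= subr_eq0 => /eqP <-; rewrite conjCK.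
Qed.

Lemma form_expand M u w (r s : C) :
  form M (fun i => r * u i + s * w i) (fun i => r * u i + s * w i) =
  r^* * r * form M u u + r^* * s * form M u w + s^* * r * form M w u
  + s^* * s * form M w w.
Proof. by rewrite formDl !formDr !formZl !formZr; ring. Qed.

(* Positivity on [|b|^2 u - (a + 1) b^* w] forces [-(a + 2) |b|^4 >= 0]. *)
Lemma psd_form_eq0 M u w : psd M -> form M w w = 0 -> form M u w = 0.
Proof.
move=> Mpsd c0; set a := form M u u; set b := form M u w.
have ra : a^* = a := psd_form_real u Mpsd.
have a0 : 0 <= a := (psdP M).1 Mpsd u.
have := (psdP M).1 Mpsd (fun i => (b * b^*) * u i + (- ((a + 1) * b^*)) * w i).
rewrite form_expand -/a -/b c0 mulr0 addr0 (psd_formC u w Mpsd) -/b.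
rewrite !rmorphN !rmorphM !rmorphD /= !conjCK ra rmorph1.
have -> : (b^* * b) * (b * b^*) * a + (b^* * b) * - ((a + 1) * b^*) * b
   + - ((a + 1) * b) * (b * b^*) * b^* = - ((b * b^*) * (b * b^*) * (a + 2)) by ring.
rewrite oppr_ge0 pmulr_lle0 ?ltr_wpDl // => bb_le0.
have : (b * b^*) * (b * b^*) == 0 by rewrite eq_le bb_le0 mulr_ge0 ?mul_conjC_ge0.
by rewrite mulf_eq0 orbb mul_conjC_eq0 => /eqP.
Qed.

Lemma psd_cauchy_schwarz M u w : psd M ->
  form M u w * (form M u w)^* <= form M u u * form M w w.
Proof.
move=> Mpsd; set a := form M u u; set b := form M u w; set c := form M w w.
have rc : c^* = c := psd_form_real w Mpsd.
have c0 : 0 <= c := (psdP M).1 Mpsd w.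
have [c_eq0|c_neq0] := eqVneq c 0.
  by rewrite /b psd_form_eq0 // c_eq0 !mul0r mulr0.
have c_gt0 : 0 < c by rewrite lt_def c_neq0 c0.
have := (psdP M).1 Mpsd (fun i => c * u i + (- b^*) * w i).
rewrite form_expand -/a -/b -/c (psd_formC u w Mpsd) -/b !rmorphN /= rc conjCK.
have -> : c * c * a + c * - b^* * b + - b * c * b^* + - b * - b^* * c
   = c * (c * a - b * b^*) by ring.
by rewrite pmulr_rge0 // subr_ge0 [c * a]mulrC.
Qed.

Definition deltav (q : 'I_k) : 'I_k -> C := fun i => (i == q)%:R.

Lemma sum_deltav (f : 'I_k -> C) q : \sum_s f s * deltav q s = f q.
Proof.
rewrite (eq_bigr (fun s => if s == q then f s else 0)) => [|s _].
  by rewrite -big_mkcond big_pred1_eq.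
by rewrite /deltav; case: eqP; rewrite ?mulr1 ?mulr0.
Qed.

Lemma form_deltavl M q v : form M (deltav q) v = \sum_j M q j * v j.
Proof.
rewrite /form (eq_bigr (fun i => if i == q then \sum_j M i j * v j else 0)).
  by rewrite -big_mkcond big_pred1_eq.
move=> i _; rewrite /deltav; case: eqP => _.
  by apply: eq_bigr => j _; rewrite rmorph1 mul1r.
by apply: big1 => j _; rewrite rmorph0 !mul0r.
Qed.

Lemma form_deltav M r s : form M (deltav r) (deltav s) = M r s.
Proof. by rewrite form_deltavl sum_deltav. Qed.

Lemma psd_mxC M r s : psd M -> M s r = (M r s)^*.
Proof. by move=> Mpsd; rewrite -!form_deltav (psd_formC _ _ Mpsd). Qed.

Lemma psd_entry_eq0 M q r : psd M -> M q q = 0 -> M r q = 0 /\ M q r = 0.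
Proof.
move=> Mpsd Mqq; have Mq : form M (deltav q) (deltav q) = 0 by rewrite form_deltav.
have Mrq : M r q = 0 by rewrite -form_deltav psd_form_eq0.
by rewrite (psd_mxC r q Mpsd) Mrq conjC0.
Qed.

Definition outer x : 'M[C]_k := \matrix_(s, t) ((x s)^* * x t).

Lemma form_outer x v :
  form (outer x) v v = (\sum_s x s * v s)^* * (\sum_t x t * v t).
Proof.
rewrite rmorph_sum mulr_suml; apply: eq_bigr => s _.
rewrite mulr_sumr; apply: eq_bigr => t _.
by rewrite mxE rmorphM; ring.
Qed.

Lemma psd_outer x : psd (outer x).
Proof. by apply/psdP => v; rewrite form_outer mulrC mul_conjC_ge0. Qed.

Lemma psd_dominated_kernel M B (t : C) z : psd M -> psd (t *: B - M) ->
  form B z z = 0 -> forall r, \sum_s M r s * z s = 0.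
Proof.
move=> Mpsd tBM Bz r; have := (psdP _).1 tBM z.
rewrite form_mxB form_mxZ Bz mulr0 sub0r oppr_ge0 => Mz_le0.
have Mz : form M z z = 0 by apply/eqP; rewrite eq_le Mz_le0 ((psdP M).1 Mpsd z).
by rewrite -form_deltavl psd_form_eq0.
Qed.

End HermitianForm.

Definition pair_ind k (p q : 'I_k) : 'I_k -> C := fun s => (s == p)%:R + (s == q)%:R.

Section PathFace.
Variables (k : nat) (q0 q1 q2 : 'I_k).
Hypotheses (q01 : q0 != q1) (q12 : q1 != q2) (q02 : q0 != q2).
Let x1 := pair_ind q0 q1.
Let x2 := pair_ind q1 q2.

(* [M] kills every vector orthogonal to [x1] and [x2]; with [M q0 q2 = 0] this
   leaves two free parameters. *)
Lemma psd_path_face (M : 'M[C]_k) (t : C) :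
  psd M -> psd (t *: (outer x1 + outer x2) - M) -> M q0 q2 = 0 ->
  M = M q0 q0 *: outer x1 + M q2 q2 *: outer x2.
Proof.
move=> Mpsd tBM M02.
have ker z : \sum_s x1 s * z s = 0 -> \sum_s x2 s * z s = 0 ->
    forall r, \sum_s M r s * z s = 0.
  move=> z1 z2; apply: psd_dominated_kernel Mpsd tBM _.
  by rewrite form_mxD !form_outer z1 z2 rmorph0 !mul0r addr0.
have n01 := negbTE q01; have n12 := negbTE q12; have n02 := negbTE q02.
have [n10 n21 n20] : [/\ (q1 == q0) = false, (q2 == q1) = false & (q2 == q0) = false].
  by rewrite (eq_sym q1) (eq_sym q2 q1) (eq_sym q2 q0) n01 n12 n02.
have col_out q r : x1 q = 0 -> x2 q = 0 -> M r q = 0.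
  move=> y1 y2; have := ker (deltav q); rewrite !sum_deltav => /(_ y1 y2 r).
  by rewrite sum_deltav.
have sum3 (f : 'I_k -> C) :
    \sum_s f s * (deltav q0 s - deltav q1 s + deltav q2 s) = f q0 - f q1 + f q2.
  under eq_bigr => s _ do rewrite mulrDr mulrBr.
  by rewrite big_split sumrB /= !sum_deltav.
have [v10 v11 v12] : [/\ x1 q0 = 1, x1 q1 = 1 & x1 q2 = 0].
  by rewrite /x1 /pair_ind !eqxx n01 n10 n20 n21 ?addr0 ?add0r.
have [v20 v21 v22] : [/\ x2 q0 = 0, x2 q1 = 1 & x2 q2 = 1].
  by rewrite /x2 /pair_ind !eqxx n01 n02 n12 n21 ?addr0 ?add0r.
have cols r : M r q0 - M r q1 + M r q2 = 0.
  by rewrite -sum3; apply: ker r; rewrite sum3 ?v10 ?v11 ?v12 ?v20 ?v21 ?v22; ring.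
have herm r s : M s r = (M r s)^* by apply: psd_mxC.
have [r00 r22] : (M q0 q0)^* = M q0 q0 /\ (M q2 q2)^* = M q2 q2.
  by rewrite -!herm.
have M20 : M q2 q0 = 0 by rewrite herm M02 conjC0.
have M01 : M q0 q1 = M q0 q0.
  by apply/eqP; rewrite eq_sym -subr_eq0 -(cols q0) M02; apply/eqP; ring.
have M21 : M q2 q1 = M q2 q2.
  by apply/eqP; rewrite eq_sym -subr_eq0 -(cols q2) M20; apply/eqP; ring.
have M10 : M q1 q0 = M q0 q0 by rewrite herm M01 r00.
have M12 : M q1 q2 = M q2 q2 by rewrite herm M21 r22.
have M11 : M q1 q1 = M q0 q0 + M q2 q2.
  by apply/eqP; rewrite eq_sym -subr_eq0 -(cols q1) M10 M12; apply/eqP; ring.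
have cases s : [\/ s = q0, s = q1, s = q2 | x1 s = 0 /\ x2 s = 0].
  have [->|s0] := eqVneq s q0; first by constructor 1.
  have [->|s1] := eqVneq s q1; first by constructor 2.
  have [->|s2] := eqVneq s q2; first by constructor 3.
  by constructor 4; rewrite /x1 /x2 /pair_ind !(negbTE s0, negbTE s1, negbTE s2) addr0.
apply/matrixP => s u; rewrite !mxE.
have [->|->|->|[u1 u2]] := cases u; last first.
  by rewrite col_out ?u1 ?u2 //; ring.
all: have [->|->|->|[s1 s2]] := cases s;
  try by rewrite herm col_out ?conjC0 ?s1 ?s2 //; ring.
all: by rewrite ?v10 ?v11 ?v12 ?v20 ?v21 ?v22 ?M01 ?M02 ?M10 ?M11 ?M12 ?M20 ?M21; ring.
Qed.
End PathFace.

Lemma psd_outer_row_dominated k (S1 S2 : 'M[C]_k) p (lam : C) :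
  psd S1 -> psd S2 -> S2 p p = S1 p p -> lam^* * lam = 1 ->
  psd ((2 * S1 p p) *: (S1 + S2) - outer (fun s => S1 p s + lam * S2 p s)).
Proof.
move=> S1psd S2psd S2pp lam_unit; apply/psdP => v.
rewrite form_mxB form_mxZ form_mxD form_outer.
have -> : \sum_s (S1 p s + lam * S2 p s) * v s =
    form S1 (deltav p) v + lam * form S2 (deltav p) v.
  rewrite !form_deltavl mulr_sumr -big_split /=.
  by apply: eq_bigr => s _; rewrite mulrDl mulrA.
have cs1 := psd_cauchy_schwarz (deltav p) v S1psd.
have cs2 := psd_cauchy_schwarz (deltav p) v S2psd.
rewrite !form_deltav S2pp in cs1 cs2.
move: cs1 cs2; set d : C := S1 p p; set g1 := form S1 (deltav p) v.
set g2 := form S2 (deltav p) v; set f1 := form S1 v v; set f2 := form S2 v v.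
move=> cs1 cs2.
(* parallelogram law: |g1 + lam g2|^2 + |g1 - lam g2|^2 = 2 |g1|^2 + 2 |g2|^2 *)
have -> : 2 * d * (f1 + f2) - (g1 + lam * g2)^* * (g1 + lam * g2) =
    2 * (d * f1 - g1 * g1^*) + 2 * (d * f2 - g2 * g2^*)
    + (g1 - lam * g2) * (g1 - lam * g2)^* + 2 * (1 - lam^* * lam) * (g2 * g2^*).
  by rewrite !rmorphD !rmorphN !rmorphM; ring.
rewrite lam_unit subrr mulr0 mul0r addr0.
by rewrite !addr_ge0 ?mul_conjC_ge0 ?mulr_ge0 ?subr_ge0.
Qed.

Section Blocks.
Variables n m : nat.

Definition idx (k : 'I_m) (i : 'I_n) : 'I_(\sum_(j < m) n) :=
  @tagnat.Rank m (fun _ => n) k i.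

Lemma idx_sig1 k i : tagnat.sig1 (idx k i) = k.
Proof. exact: tagnat.Rank1K. Qed.

Lemma idx_sig2 k i : (tagnat.sig2 (idx k i) : 'I_n) = i.
Proof. by apply: val_inj; rewrite /idx tagnat.Rank2K. Qed.

Lemma idx_sig s : idx (tagnat.sig1 s) (tagnat.sig2 s) = s.
Proof. exact: tagnat.sig2K. Qed.

Lemma idx_inj k i l j : idx k i = idx l j -> k = l /\ i = j.
Proof.
move=> e; split; first by rewrite -(idx_sig1 k i) e idx_sig1.
by rewrite -(idx_sig2 k i) e idx_sig2.
Qed.

Lemma eq_idx k i l j : (idx k i == idx l j) = (k == l) && (i == j).
Proof. by apply/eqP/andP => [/idx_inj[-> ->]|[/eqP-> /eqP->]]. Qed.

Lemma blockmxE (F : 'I_m -> 'I_m -> 'M[C]_n) k l i j :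
  blockmx F (idx k i) (idx l j) = F k l i j.
Proof. by rewrite /blockmx mxE !idx_sig1 !idx_sig2. Qed.

Lemma blockmxP (F : 'I_m -> 'I_m -> 'M[C]_n) (G : 'M[C]_(\sum_(j < m) n)) :
  (forall k l i j, G (idx k i) (idx l j) = F k l i j) -> blockmx F = G.
Proof.
by move=> FG; apply/matrixP => s t; rewrite -(idx_sig s) -(idx_sig t) FG blockmxE.
Qed.

Definition blocks_of (G : 'M[C]_(\sum_(j < m) n)) : 'I_m -> 'I_m -> 'M[C]_n :=
  fun k l => \matrix_(i, j) G (idx k i) (idx l j).

Lemma blocks_ofK G : blockmx (blocks_of G) = G.
Proof. by apply: blockmxP => k l i j; rewrite mxE. Qed.

End Blocks.

Section OperatorSystem.
Variables (n : nat) (Rl : rel 'I_n).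
Implicit Types (x y : 'M[C]_n).

Lemma inE0 : inE Rl 0.
Proof. by move=> i j _; rewrite mxE. Qed.

Lemma inE_lin a x y : inE Rl x -> inE Rl y -> inE Rl (a *: x + y).
Proof. by move=> Ex Ey i j Rij; rewrite !mxE Ex // Ey // mulr0 addr0. Qed.

Lemma inE_scale a x : inE Rl x -> inE Rl (a *: x).
Proof. by move=> Ex; rewrite -[_ *: x]addr0; apply/inE_lin/inE0. Qed.

Lemma eq_posE m (F G : 'I_m -> 'I_m -> 'M[C]_n) :
  (forall k l, F k l = G k l) -> posE Rl F -> posE Rl G.
Proof.
move=> FG [EF psdF]; split=> [k l|]; first by rewrite -FG.
by congr psd: psdF; apply: blockmxP => k l i j; rewrite blockmxE FG.
Qed.

Definition edge_blocks m (a b : 'I_n) (ka kb : 'I_m) :=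
  blocks_of (outer (pair_ind (idx ka a) (idx kb b))).

Lemma posE_edge_blocks m (a b : 'I_n) (ka kb : 'I_m) :
  tolerance Rl -> Rl a b -> posE Rl (edge_blocks a b ka kb).
Proof.
move=> [Rrefl Rsym] Rab; rewrite /edge_blocks.
split; last by rewrite blocks_ofK; apply: psd_outer.
have supp k i : pair_ind (idx ka a) (idx kb b) (idx k i) != 0 -> i = a \/ i = b.
  rewrite /pair_ind; case: (idx k i =P idx ka a) => [/idx_inj[_ ->]|_]; first by left.
  by case: (idx k i =P idx kb b) => [/idx_inj[_ ->]|_]; [right|rewrite addr0 eqxx].
move=> k l i j; apply: contraNeq; rewrite !mxE mulf_eq0 negb_or conjC_eq0.
by case/andP=> /supp[->|->] /supp[->|->]; rewrite ?Rrefl // Rsym.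
Qed.

Definition lifts m (G : 'M[C]_(\sum_(j < m) n)) (F : 'I_m -> 'I_m -> 'M[C]_n) :=
  forall k l i j, Rl i j -> G (idx k i) (idx l j) = F k l i j.

Lemma posEd_lift m (F : 'I_m -> 'I_m -> 'M[C]_n) :
  posEd Rl F -> exists2 G, psd G & lifts G F.
Proof.
move=> [_ [N [EN psdFN]]]; exists (blockmx (fun k l => F k l + N k l)) => // k l i j Rij.
by rewrite blockmxE mxE EN // addr0.
Qed.

Lemma posEd_of_lift m (F : 'I_m -> 'I_m -> 'M[C]_n) G :
  (forall k l, inE Rl (F k l)) -> psd G -> lifts G F -> posEd Rl F.
Proof.
move=> EF psdG GF; split=> //; exists (fun k l => blocks_of G k l - F k l); split.
  by move=> k l i j Rij; rewrite !mxE GF // subrr.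
by congr psd: psdG; apply/esym/blockmxP => k l i j; rewrite !mxE addrC subrK.
Qed.

Lemma posEd_diag_neq0 m (F : 'I_m -> 'I_m -> 'M[C]_n) k :
  reflexive Rl -> posEd Rl F -> F k k != 0 -> exists i, F k k i i != 0.
Proof.
move=> Rrefl posF; have [G psdG GF] := posEd_lift posF.
case: (pickP (fun i => F k k i i != 0)) => [i Fii|Fdiag]; first by exists i.
case/eqP; apply/matrixP => i j; rewrite mxE.
have [Rij|Rij] := boolP (Rl i j); last by rewrite posF.1.
have Gjj : G (idx k j) (idx k j) = 0 by rewrite GF //; apply/eqP/negbFE/Fdiag.
by rewrite -GF // (psd_entry_eq0 (idx k i) psdG Gjj).1.
Qed.

Definition truncE m (T : 'M[C]_(\sum_(j < m) n)) : 'I_m -> 'I_m -> 'M[C]_n :=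
  fun k l => \matrix_(i, j) if Rl i j then T (idx k i) (idx l j) else 0.

Lemma inE_truncE m (T : 'M[C]_(\sum_(j < m) n)) k l : inE Rl (truncE T k l).
Proof. by move=> i j /negbTE Rij; rewrite mxE Rij. Qed.

Lemma lifts_truncE m (T : 'M[C]_(\sum_(j < m) n)) : lifts T (truncE T).
Proof. by move=> k l i j Rij; rewrite mxE Rij. Qed.

Lemma posEd_truncE m (T : 'M[C]_(\sum_(j < m) n)) : psd T -> posEd Rl (truncE T).
Proof. by move=> psdT; apply: posEd_of_lift psdT (lifts_truncE T); apply: inE_truncE. Qed.

Record coiso (phi psi : 'M[C]_n -> 'M[C]_n) : Prop := Coiso {
  coiso_inE : forall x, inE Rl x -> inE Rl (phi x);
  coiso_inE_inv : forall y, inE Rl y -> inE Rl (psi y);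
  coiso_lin : forall a x y, inE Rl x -> inE Rl y -> phi (a *: x + y) = a *: phi x + phi y;
  coiso_K : forall x, inE Rl x -> psi (phi x) = x;
  coiso_Kinv : forall y, inE Rl y -> phi (psi y) = y;
  coiso_cp : forall m (F : 'I_m -> 'I_m -> 'M[C]_n),
    posE Rl F -> posEd Rl (fun k l => phi (F k l));
  coiso_cp_inv : forall m (F : 'I_m -> 'I_m -> 'M[C]_n),
    posEd Rl F -> posE Rl (fun k l => psi (F k l)) }.

Lemma coisoP : complete_order_iso_E_Ed Rl -> exists phi psi, coiso phi psi.
Proof. by move=> [phi [psi [? ? ? [? ?] [_ [? ?]]]]]; exists phi, psi. Qed.

Section CoisoLinear.
Variables (phi psi : 'M[C]_n -> 'M[C]_n).
Hypothesis iso : coiso phi psi.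

Lemma coiso_phi0 : phi 0 = 0.
Proof.
have := coiso_lin iso 1 inE0 inE0; rewrite !scale1r !addr0 => phi00.
by apply: (addrI (phi 0)); rewrite addr0 -phi00.
Qed.

Lemma coiso_phiZ a x : inE Rl x -> phi (a *: x) = a *: phi x.
Proof.
by move=> Ex; rewrite -[a *: x]addr0 (coiso_lin iso) ?coiso_phi0 ?addr0 //; apply: inE0.
Qed.

Lemma coiso_psi_lin a x y : inE Rl x -> inE Rl y ->
  psi (a *: x + y) = a *: psi x + psi y.
Proof.
move=> Ex Ey; have Ex' := coiso_inE_inv iso Ex; have Ey' := coiso_inE_inv iso Ey.
by rewrite -{1}(coiso_Kinv iso Ex) -{1}(coiso_Kinv iso Ey) -(coiso_lin iso)
  ?(coiso_K iso) //; apply: inE_lin.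
Qed.

Lemma coiso_psiN y : inE Rl y -> psi (- y) = - psi y.
Proof.
have psi0 : psi 0 = 0 by rewrite -{1}coiso_phi0 (coiso_K iso) //; apply: inE0.
move=> Ey; rewrite -scaleN1r -[_ *: y]addr0 coiso_psi_lin ?psi0 ?addr0 ?scaleN1r //.
exact: inE0.
Qed.

End CoisoLinear.
End OperatorSystem.

Lemma path_exit_neighbourhood n (Rl : rel 'I_n) (i : 'I_n) (p : seq 'I_n) x :
  path (gadj Rl) x p -> Rl i x -> ~~ Rl i (last x p) ->
  exists b c, [/\ Rl i b, Rl b c & ~~ Rl i c].
Proof.
elim: p x => [|y p IHp] x /=; first by move=> _ ->.
move=> /andP[/andP[_ Rxy] xp] Rix Rlast.
have [Riy|Riy] := boolP (Rl i y); first exact: IHp Riy Rlast.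
by exists x, y.
Qed.

Lemma induced_path3 n (Rl : rel 'I_n) : tolerance Rl -> gconnected Rl ->
  diameter_ge Rl 2 -> exists a b c, [/\ Rl a b, Rl b c & ~~ Rl a c].
Proof.
move=> [Rrefl _] Rconn [i [j dij]].
have Rij : ~~ Rl i j.
  apply/negP => Rij; have [eij|nij] := eqVneq i j.
    by have := dij [::] isT; rewrite eij => /(_ erefl).
  by have := dij [:: j]; rewrite /= /gadj nij Rij => /(_ isT erefl).
have /connectP[p ip jE] := Rconn i j; rewrite jE in Rij.
have [b [c [Rib Rbc Ric]]] := path_exit_neighbourhood ip (Rrefl i) Rij.
by exists i, b, c.
Qed.

Definition k0 : 'I_3 := @Ordinal 3 0 isT.
Definition k1 : 'I_3 := @Ordinal 3 1 isT.
Definition k2 : 'I_3 := @Ordinal 3 2 isT.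

Section PathObstruction.
Variables (n : nat) (Rl : rel 'I_n) (a b c : 'I_n).
Hypotheses (Rtol : tolerance Rl) (Rab : Rl a b) (Rbc : Rl b c) (Rac : ~~ Rl a c).
Variables (phi psi : 'M[C]_n -> 'M[C]_n).
Hypothesis iso : coiso Rl phi psi.

Let P1 := edge_blocks a b k0 k1.
Let P2 := edge_blocks b c k1 k2.

Lemma posE_P1 : posE Rl P1. Proof. exact: posE_edge_blocks. Qed.
Lemma posE_P2 : posE Rl P2. Proof. exact: posE_edge_blocks. Qed.

Lemma path_face_E (t : C) (Y : 'I_3 -> 'I_3 -> 'M[C]_n) :
  posE Rl Y -> posE Rl (fun k l => t *: (P1 k l + P2 k l) - Y k l) ->
  exists mu nu, forall k l, Y k l = mu *: P1 k l + nu *: P2 k l.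
Proof.
move=> [EY psdY] [_ psdZ].
have idx_neq k l i j : k != l -> idx k i != idx l j :> 'I_(\sum_(s < 3) n).
  by move=> kl; apply: contraNneq kl => /idx_inj[-> _].
have Y02 : blockmx Y (idx k0 a) (idx k2 c) = 0 by rewrite blockmxE EY.
have YE := psd_path_face (idx_neq k0 k1 a b isT) (idx_neq k1 k2 b c isT)
  (idx_neq k0 k2 a c isT) psdY _ Y02.
have /YE {}YE : psd (t *: (outer (pair_ind (idx k0 a) (idx k1 b))
      + outer (pair_ind (idx k1 b) (idx k2 c))) - blockmx Y).
  by congr psd: psdZ; apply: blockmxP => k l i j; rewrite !mxE !idx_sig1 !idx_sig2.
exists (blockmx Y (idx k0 a) (idx k0 a)), (blockmx Y (idx k2 c) (idx k2 c)).
by move=> k l; apply/matrixP => i j; rewrite -(blockmxE Y) {1}YE !mxE.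
Qed.

Lemma path_face_Ed (t : C) (y : 'I_3 -> 'I_3 -> 'M[C]_n) :
  posEd Rl y -> posEd Rl (fun k l => t *: (phi (P1 k l) + phi (P2 k l)) - y k l) ->
  exists mu nu, forall k l, y k l = mu *: phi (P1 k l) + nu *: phi (P2 k l).
Proof.
move=> posy posz; have [EP1 _] := posE_P1; have [EP2 _] := posE_P2.
have [Ey _] := posy.
have posz' : posE Rl (fun k l => t *: (P1 k l + P2 k l) - psi (y k l)).
  apply: eq_posE (coiso_cp_inv iso posz) => k l.
  have E1 := coiso_inE iso (EP1 k l); have E2 := coiso_inE iso (EP2 k l).
  have Ey' : inE Rl (- y k l) by move=> i j Rij; rewrite mxE (Ey k l) // oppr0.
  rewrite scalerDr -addrA !(coiso_psi_lin iso) //; last exact: inE_lin.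
  by rewrite (coiso_psiN iso) // !(coiso_K iso) // scalerDr addrA.
have [mu [nu psiy]] := path_face_E (coiso_cp_inv iso posy) posz'.
exists mu, nu => k l; rewrite -(coiso_Kinv iso (Ey k l)) psiy.
by rewrite (coiso_lin iso) ?(coiso_phiZ iso) //; apply: inE_scale.
Qed.

Lemma P1_P2_shared_block : P1 k1 k1 = P2 k1 k1.
Proof. by apply/matrixP => i j; rewrite !mxE /pair_ind !eq_idx /= ?add0r ?addr0. Qed.

Lemma P1_block_k2 : P1 k2 k2 = 0.
Proof.
by apply/matrixP => i j; rewrite !mxE /pair_ind !eq_idx /= add0r rmorph0 mul0r.
Qed.

Lemma P2_block_k0 : P2 k0 k0 = 0.
Proof.
by apply/matrixP => i j; rewrite !mxE /pair_ind !eq_idx /= add0r rmorph0 mul0r.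
Qed.

Lemma phi_diag_neq0 (P : 'I_3 -> 'I_3 -> 'M[C]_n) k i :
  posE Rl P -> P k k i i != 0 -> exists j, phi (P k k) j j != 0.
Proof.
move=> posP Pii; have [Rrefl _] := Rtol; have [EP _] := posP.
apply: posEd_diag_neq0 Rrefl (coiso_cp iso posP) _.
apply: contra_neq Pii => phiP0; apply/eqP; rewrite -(coiso_K iso (EP k k)) phiP0.
by rewrite -(coiso_phi0 iso) ?(coiso_K iso) ?mxE //; apply: inE0.
Qed.

Section DualWitness.
Variables (S1 S2 : 'M[C]_(\sum_(j < 3) n)) (i0 j0 j2 : 'I_n).
Hypotheses (psdS1 : psd S1) (psdS2 : psd S2).
Hypothesis S1lift : lifts Rl S1 (fun k l => phi (P1 k l)).
Hypothesis S2lift : lifts Rl S2 (fun k l => phi (P2 k l)).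
Let p := idx k1 i0.
Let q0 := idx k0 j0.
Let q2 := idx k2 j2.

Lemma dual_face_witness (lam : C) : lam^* * lam = 1 -> exists mu nu, forall k l,
  truncE Rl (outer (fun s => S1 p s + lam * S2 p s)) k l
    = mu *: phi (P1 k l) + nu *: phi (P2 k l).
Proof.
move=> lam_unit; have [Rrefl _] := Rtol.
have [EP1 _] := posE_P1; have [EP2 _] := posE_P2.
have S2pp : S2 p p = S1 p p by rewrite S1lift // S2lift // P1_P2_shared_block.
apply: (@path_face_Ed (2 * S1 p p)); first exact/posEd_truncE/psd_outer.
apply: posEd_of_lift (psd_outer_row_dominated psdS1 psdS2 S2pp lam_unit) _.
  move=> k l i j Rij; rewrite !mxE (coiso_inE iso (EP1 k l)) //.
  by rewrite (coiso_inE iso (EP2 k l)) // (negbTE Rij) addr0 mulr0 subr0.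
by move=> k l i j Rij; rewrite !mxE Rij -S1lift // -S2lift.
Qed.

Lemma dual_face_coeffs (lam : C) : lam^* * lam = 1 -> exists mu nu, [/\
  ((1 + lam) * S1 p p)^* * ((1 + lam) * S1 p p) = (mu + nu) * S1 p p,
  (S1 p q0)^* * S1 p q0 = mu * S1 q0 q0 &
  (S2 p q2)^* * S2 p q2 = nu * S2 q2 q2].
Proof.
move=> lam_unit; have [Rrefl _] := Rtol.
have [mu [nu e]] := dual_face_witness lam_unit; exists mu, nu.
have entry k i :
    (S1 p (idx k i) + lam * S2 p (idx k i))^* * (S1 p (idx k i) + lam * S2 p (idx k i))
    = mu * S1 (idx k i) (idx k i) + nu * S2 (idx k i) (idx k i).
  have := congr1 (fun M : 'M[C]_n => M i i) (e k k).
  by rewrite !mxE Rrefl S1lift // S2lift.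
have S2q0 : S2 p q0 = 0.
  apply: (psd_entry_eq0 p psdS2 _).1.
  by rewrite S2lift // P2_block_k0 (coiso_phi0 iso) mxE.
have S1q2 : S1 p q2 = 0.
  apply: (psd_entry_eq0 p psdS1 _).1.
  by rewrite S1lift // P1_block_k2 (coiso_phi0 iso) mxE.
have S2pp : S2 p p = S1 p p by rewrite S1lift // S2lift // P1_P2_shared_block.
split.
- by rewrite mulrDl mul1r; have := entry k1 i0; rewrite -/p S2pp => ->; ring.
- have := entry k0 j0; rewrite -/q0 S2q0 mulr0 addr0 => ->.
  by rewrite S2lift // P2_block_k0 (coiso_phi0 iso) mxE mulr0 addr0.
- have := entry k2 j2; rewrite -/q2 S1q2 add0r rmorphM mulrACA lam_unit mul1r => ->.
  by rewrite S1lift // P1_block_k2 (coiso_phi0 iso) mxE mulr0 add0r.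
Qed.
End DualWitness.

Lemma no_coiso_along_path : False.
Proof.
have [Rrefl _] := Rtol.
have [S1 psdS1 S1lift] := posEd_lift (coiso_cp iso posE_P1).
have [S2 psdS2 S2lift] := posEd_lift (coiso_cp iso posE_P2).
have [i0 d_neq0] : exists i, phi (P1 k1 k1) i i != 0.
  apply: (@phi_diag_neq0 _ k1 b posE_P1).
  by rewrite !mxE /pair_ind !eq_idx /= !eqxx add0r conjC1 mulr1 oner_neq0.
have [j0 D0_neq0] : exists j, phi (P1 k0 k0) j j != 0.
  apply: (@phi_diag_neq0 _ k0 a posE_P1).
  by rewrite !mxE /pair_ind !eq_idx /= !eqxx addr0 conjC1 mulr1 oner_neq0.
have [j2 D2_neq0] : exists j, phi (P2 k2 k2) j j != 0.
  apply: (@phi_diag_neq0 _ k2 c posE_P2).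
  by rewrite !mxE /pair_ind !eq_idx /= !eqxx add0r conjC1 mulr1 oner_neq0.
have coeffs := dual_face_coeffs i0 j0 j2 psdS1 psdS2 S1lift S2lift.
have [mu [nu [d_plus D0_mu D2_nu]]] := coeffs 1 (etrans (mulr1 _) (conjC1 C)).
have mone_unit : (-1 : C)^* * -1 = 1 by rewrite (conjCN1 C) mulrNN mulr1.
have [mu' [nu' [d_minus D0_mu' D2_nu']]] := coeffs (-1) mone_unit.
rewrite -S1lift // in d_neq0; rewrite -S1lift // in D0_neq0.
rewrite -S2lift // in D2_neq0.
have mu_eq : mu' = mu by apply: (mulIf D0_neq0); rewrite -D0_mu -D0_mu'.
have nu_eq : nu' = nu by apply: (mulIf D2_neq0); rewrite -D2_nu -D2_nu'.
move: d_minus; rewrite mu_eq nu_eq subrr mul0r conjC0 mul0r -d_plus => /esym/eqP.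
by rewrite mulrC mul_conjC_eq0 mulf_eq0 (negbTE d_neq0) orbF -mulr2n pnatr_eq0.
Qed.

End PathObstruction.

Theorem mainTheorem9 (n : nat) (Rl : rel 'I_n) :
  tolerance Rl -> gconnected Rl -> chordal Rl -> diameter_ge Rl 2 ->
  ~ complete_order_iso_E_Ed Rl.
Proof.
move=> Rtol Rconn _ Rdiam /coisoP[phi [psi iso]].
have [a [b [c [Rab Rbc Rac]]]] := induced_path3 Rtol Rconn Rdiam.
exact: (no_coiso_along_path Rtol Rab Rbc Rac iso).
Qed.
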